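(* Let $(R,d)$ be a fusion algebra with set of irreducible objects $I$. For every finite, symmetric ($\bar X=X$), nonempty set $X\subseteq I$ there exists $C_X>0$ such that for every finite set $A\subseteq I$ we have $|\partial_X(A)|\le C_X|\partial^{\mathrm{inn}}_X(A)|$. In particular, if $X$ is moreover generating, then $\mathrm{F\o l}_X(R,d)\le C_X\,\mathrm{F\o l}^{\mathrm{inn}}_X(R,d)$.
   Context: A fusion algebra $(R,d)$ consists of a set $I$ with distinguished $e$ and involution $\alpha\mapsto\bar\alpha$, a unital ring structure on $R=\mathbb{Z}[I]$ with unit $e$ and $\xi\eta=\sum_\alpha N^\alpha_{\xi,\eta}\alpha$, $N^\alpha_{\xi,\eta}\in\mathbb{Z}_{\ge0}$ finitely many nonzero, the involution extending to a $\mathbb{Z}$-linear antimultiplicative involution, Frobenius reciprocity $N^\alpha_{\xi,\eta}=N^\xi_{\alpha,\bar\eta}=N^\eta_{\bar\xi,\alpha}$, and $\mathbb{Z}$-linear multiplicative $d:R\to\mathbb{R}$ with $d(\bar\alpha)=d(\alpha)\ge1$ on $I$. $\mathrm{supp}(r)$: elements of $I$ with nonzero coefficient in $r$. $|A|=\sum_{\alpha\in A}d(\alpha)^2$, $A^c=I\setminus A$. $\partial_X(A)=\{\alpha\in A:\exists x\in X,\ \mathrm{supp}(\alpha x)\not\subseteq A\}\cup\{\alpha\in A^c:\exists x\in X,\ \mathrm{supp}(\alpha x)\not\subseteq A^c\}$, $\partial^{\mathrm{inn}}_X(A)=\{\alpha\in A:\exists x\in X,\ \mathrm{supp}(\alpha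 x)\not\subseteq A\}$. A finite generating set is a finite $X$, $\bar X=X$, such that every $\alpha\in I$ lies in $\mathrm{supp}(x_1\cdots x_n)$ for some $x_i\in X$. $\mathrm{F\o l}_X(R,d)=\inf_A|\partial_XA|/|A|$ and $\mathrm{F\o l}^{\mathrm{inn}}_X(R,d)=\inf_A|\partial^{\mathrm{inn}}_XA|/|A|$ over nonempty finite $A\subseteq I$. *)

From HB Require Import structures.
From mathcomp Require Import all_boot all_order all_algebra.
From mathcomp Require Import all_classical all_reals all_analysis.
Set Implicit Arguments. Unset Strict Implicit. Unset Printing Implicit Defensive.
Import Order.TTheory GRing.Theory Num.Theory.
Local Open Scope classical_set_scope.
Local Open Scope ring_scope.

(* A fusion algebra on the set of irreducibles I (a choiceType), with unit e,
   involution bar, structure constants N xi eta alpha = N^alpha_{xi,eta}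
   (coefficient of alpha in the product xi*eta), and dimension function d.
   Finite sums over I are the finitely supported sums of fsbigop. *)
Section FusionAlgebra.
Variables (R : realType) (I : choiceType) (e : I) (bar : I -> I)
  (N : I -> I -> I -> nat) (d : I -> R).

(* coefficient of gamma in (r * x), r an element of Z[I] with nat coeffs *)
Definition rmul_basis (r : I -> nat) (x : I) : I -> nat :=
  fun g => \big[addn/0%N]_(b \in [set: I]) (r b * N b x g)%N.

Record is_fusion_algebra : Prop := {
  fa_fin_supp : forall xi eta, finite_set [set a | N xi eta a != 0%N];
  fa_unitl : forall eta a, N e eta a = (a == eta) :> nat;
  fa_unitr : forall xi a, N xi e a = (a == xi) :> nat;
  fa_assoc : forall xi eta zeta a,
    \big[addn/0%N]_(b \in [set: I]) (N xi eta b * N b zeta a)%N =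
    \big[addn/0%N]_(b \in [set: I]) (N eta zeta b * N xi b a)%N;
  fa_invol : forall a, bar (bar a) = a;
  fa_antimult : forall xi eta a, N (bar eta) (bar xi) (bar a) = N xi eta a;
  fa_frob1 : forall xi eta a, N xi eta a = N a (bar eta) xi;
  fa_frob2 : forall xi eta a, N xi eta a = N (bar xi) a eta;
  fa_d_bar : forall a, d (bar a) = d a;
  fa_d_ge1 : forall a, 1 <= d a;
  fa_d_mult : forall xi eta,
    d xi * d eta = \sum_(a \in [set: I]) (N xi eta a)%:R * d a
}.

(* coefficients of the product x_1 x_2 ... x_n in Z[I] *)
Definition word_prod (x : I) (xs : seq I) : I -> nat :=
  foldl rmul_basis (fun a => (a == x) : nat) xs.

Definition generating (X : set I) : Prop :=
  finite_set X /\ bar @` X = X /\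
  forall a, exists x xs, X x /\ all (fun y => `[< X y >]) xs /\
                       word_prod x xs a != 0%N.

Definition weight (A : set I) : \bar R := (\esum_(a in A) ((d a) ^+ 2)%:E)%E.

Definition inner_boundary (X A : set I) : set I :=
  [set a | A a /\ exists x, X x /\ exists b, N a x b != 0%N /\ ~ A b].

Definition boundary (X A : set I) : set I :=
  inner_boundary X A `|`
  [set a | ~ A a /\ exists x, X x /\ exists b, N a x b != 0%N /\ A b].

(* infimum over nonempty finite A of |bd A| / |A| (these weights are finite) *)
Definition folner_const (bd : set I -> set I) : R :=
  inf [set fine (weight (bd A)) / fine (weight A)
      | A in [set A : set I | finite_set A /\ A !=set0]].

Definition Fol (X : set I) : R := folner_const (boundary X).
Definition Fol_inn (X : set I) : R := folner_const (inner_boundary X).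

End FusionAlgebra.

From HB Require Import structures.
From mathcomp Require Import all_boot all_order all_algebra.
From mathcomp Require Import all_classical all_reals all_analysis.
From mathcomp Require Import finmap lra.
Import Order.TTheory GRing.Theory Num.Theory.
Local Open Scope classical_set_scope.
Local Open Scope ring_scope.
Set Implicit Arguments. Unset Strict Implicit.

(* If [a] lies outside [A] and some [b] in [supp(a x)] lies in [A], Frobenius
   reciprocity puts [a] in [supp(b xbar)], and [b] is an inner boundary point.
   So the outer boundary is covered by the supports of [b y], [b] in the inner
   boundary and [y] in [X]; as [d(b) d(y) = sum_a N^a_{b,y} d(a)] dominates the
   sum of [d] over [supp(b y)], each support has weight at most [(d(b) d(y))^2].
   Summing, [|outer boundary| <= |X| |inner boundary|], so [C_X = 1 + |X|]
   works, and the Folner inequality follows by comparing the ratios defining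
   the two infima. *)

Lemma sum_sqr_le_sqr_sum (R : realDomainType) (T : Type) (s : seq T) (F : T -> R) :
  (forall i, 0 <= F i) -> \sum_(i <- s) F i ^+ 2 <= (\sum_(i <- s) F i) ^+ 2.
Proof.
move=> F_ge0; elim: s => [|h s IH]; first by rewrite !big_nil expr0n.
rewrite !big_cons sqrrD mulr2n.
have sum_ge0 : 0 <= \sum_(i <- s) F i by apply: sumr_ge0.
have : 0 <= F h * \sum_(i <- s) F i by rewrite mulr_ge0.
lra.
Qed.

Lemma fine_le_scale (R : realDomainType) (x y : \bar R) (c : R) :
  (0 <= x)%E -> y \is a fin_num -> (x <= c%:E * y)%E -> fine x <= c * fine y.
Proof.
move=> x_ge0 /fineK <- x_le.
have xfin : x \is a fin_num by rewrite ge0_fin_numE // (le_lt_trans x_le) ?ltry.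
by move: x_le; rewrite -(fineK xfin) -EFinM lee_fin.
Qed.

Section Weight.
Variables (R : realType) (I : choiceType) (d : I -> R).

Let sqr_ge0E a : (0 <= (d a ^+ 2)%:E)%E.
Proof. by rewrite lee_fin sqr_ge0. Qed.

Lemma weight_ge0 A : (0 <= weight d A)%E.
Proof. exact: esum_ge0. Qed.

Lemma weight_fset A :
  finite_set A -> weight d A = (\sum_(a <- fset_set A) d a ^+ 2)%:E.
Proof. by move=> finA; rewrite /weight esum_fset // fsbig_finite // sumEFin. Qed.

Lemma weight_fin_num A : finite_set A -> weight d A \is a fin_num.
Proof. by move=> /weight_fset ->. Qed.

Lemma weight_setU_le A B : (weight d (A `|` B) <= weight d A + weight d B)%E.
Proof.
rewrite /weight (esum_mkcond (A `|` B)) (esum_mkcond A) (esum_mkcond B).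
rewrite -esumD => [|a _|a _]; try by case: ifP.
apply: le_esum => a _; rewrite in_setU.
case: (a \in A); case: (a \in B) => /=; rewrite ?adde0 ?add0e //.
by rewrite leeDl.
Qed.

Lemma weight_cover_le (J : choiceType) (F : set J) (S : J -> set I) (O : set I) :
  finite_set F -> O `<=` \bigcup_(j in F) S j ->
  (weight d O <= \sum_(j <- fset_set F) weight d (S j))%E.
Proof.
move=> finF OS; rewrite /weight esum_mkcond.
under eq_bigr do rewrite esum_mkcond.
rewrite -esum_sum; last by move=> a j _ _; case: ifP.
apply: le_esum => a _; case: ifPn => [/set_mem/OS [j Fj Sja] | _].
  rewrite (bigD1_seq j) ?fset_uniq ?in_fset_set ?mem_set //=.
  by rewrite leeDl // sume_ge0 // => i _; case: ifP.
by rewrite sume_ge0 // => i _; case: ifP.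
Qed.

End Weight.

Section FusionBoundary.
Variables (R : realType) (I : choiceType) (e : I) (bar : I -> I)
  (N : I -> I -> I -> nat) (d : I -> R).
Hypothesis HFA : is_fusion_algebra e bar N d.

Definition supp_mul (b y : I) : set I := [set a | N b y a != 0%N].

Definition outer_boundary (X A : set I) : set I :=
  [set a | ~ A a /\ exists x, X x /\ exists b, N a x b != 0%N /\ A b].

Lemma boundaryE X A :
  boundary N X A = inner_boundary N X A `|` outer_boundary X A.
Proof. by []. Qed.

Lemma inner_boundary_sub X A : inner_boundary N X A `<=` A.
Proof. by move=> a []. Qed.

Lemma finite_supp_mul b y : finite_set (supp_mul b y).
Proof. exact: fa_fin_supp HFA b y. Qed.

Lemma dim_ge0 a : 0 <= d a.
Proof. exact: le_trans ler01 (fa_d_ge1 HFA a). Qed.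

Lemma sum_dim_supp_mul_le b y :
  \sum_(a <- fset_set (supp_mul b y)) d a <= d b * d y.
Proof.
have finS := finite_supp_mul b y.
rewrite (fa_d_mult HFA) -(fsbig_widen (supp_mul b y)) //; last first.
  by move=> a [_ /negP/negbNE/eqP Nba]; rewrite /preimage /= Nba mul0r.
rewrite fsbig_finite // !big_seq; apply: ler_sum => a.
rewrite in_fset_set // => /set_mem Nba.
by rewrite ler_peMl ?dim_ge0 // ler1n lt0n.
Qed.

Lemma weight_supp_mul_le b y :
  (weight d (supp_mul b y) <= ((d b * d y) ^+ 2)%:E)%E.
Proof.
rewrite weight_fset ?lee_fin; last exact: finite_supp_mul.
apply: le_trans (sum_sqr_le_sqr_sum _ dim_ge0) _.
have sum_ge0 : 0 <= \sum_(a <- fset_set (supp_mul b y)) d a.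
  by apply: sumr_ge0 => a _; apply: dim_ge0.
by rewrite !expr2 ler_pM // sum_dim_supp_mul_le.
Qed.

Lemma outer_boundary_sub X A : bar @` X = X ->
  outer_boundary X A `<=`
    \bigcup_(b in inner_boundary N X A) \bigcup_(y in X) supp_mul b y.
Proof.
move=> Xsym a [Aa [x [Xx [b [Nab Ab]]]]].
have Xbarx : X (bar x) by rewrite -Xsym; exists x.
have Nba : N b (bar x) a != 0%N by rewrite -(fa_frob1 HFA).
exists b; last by exists (bar x).
by split=> //; exists (bar x); split=> //; exists a.
Qed.

Lemma weight_outer_boundary_le X A :
  finite_set X -> bar @` X = X -> finite_set A ->
  (weight d (outer_boundary X A) <= weight d X * weight d (inner_boundary N X A))%E.
Proof.
move=> finX Xsym finA.
have finB := sub_finite_set (@inner_boundary_sub X A) finA.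
apply: le_trans (weight_cover_le d finB (outer_boundary_sub Xsym)) _.
rewrite (weight_fset d finX) (weight_fset d finB) -EFinM mulr_sumr -sumEFin.
apply: lee_sum => b _; apply: le_trans (weight_cover_le d finX (@subset_refl _ _)) _.
rewrite mulr_suml -sumEFin; apply: lee_sum => y _.
by rewrite mulrC -exprMn weight_supp_mul_le.
Qed.

Lemma weight_boundary_le X A :
  finite_set X -> bar @` X = X -> finite_set A ->
  (weight d (boundary N X A) <=
     (1 + fine (weight d X))%:E * weight d (inner_boundary N X A))%E.
Proof.
move=> finX Xsym finA.
have finB := sub_finite_set (@inner_boundary_sub X A) finA.
rewrite boundaryE; apply: le_trans (weight_setU_le _ _ _) _.
apply: le_trans (leeD2l _ (weight_outer_boundary_le finX Xsym finA)) _.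
rewrite -(fineK (weight_fin_num d finX)) -(fineK (weight_fin_num d finB)).
by rewrite -EFinM -EFinD -EFinM lee_fin mulrDl mul1r.
Qed.

End FusionBoundary.

(* [i0] only makes the family of ratios nonempty: [inf] of an empty set is a
   junk value. *)
Lemma folner_const_le (R : realType) (I : choiceType) (d : I -> R) (i0 : I)
    (bd1 bd2 : set I -> set I) (C : R) :
  0 < C -> (forall A, finite_set A -> finite_set (bd2 A)) ->
  (forall A, finite_set A -> (weight d (bd1 A) <= C%:E * weight d (bd2 A))%E) ->
  folner_const d bd1 <= C * folner_const d bd2.
Proof.
move=> C_gt0 fin2 bd_le; rewrite /folner_const.
set S := [set A : set I | finite_set A /\ A !=set0].
have ratio_ge0 bd A : 0 <= fine (weight d (bd A)) / fine (weight d A).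
  by rewrite divr_ge0 // fine_ge0 // weight_ge0.
have ratio_le A : S A -> fine (weight d (bd1 A)) / fine (weight d A) <=
    C * (fine (weight d (bd2 A)) / fine (weight d A)).
  move=> [finA _]; rewrite mulrA ler_wpM2r ?invr_ge0 ?fine_ge0 ?weight_ge0 //.
  apply: fine_le_scale; [exact: weight_ge0 | exact/weight_fin_num/fin2 | exact: bd_le].
rewrite mulrC -ler_pdivrMr //; apply: lb_le_inf.
  by exists (fine (weight d (bd2 [set i0])) / fine (weight d [set i0])), [set i0];
    split; [exact: finite_set1 | exists i0].
move=> _ [A SA <-]; rewrite ler_pdivrMr // mulrC; apply: le_trans (ratio_le A SA).
by apply: ge_inf; [exists 0 => _ [B _ <-]; exact: ratio_ge0 | exists A].
Qed.

Theorem proposition3p3 (R : realType) (I : choiceType) (e : I) (bar : I -> I)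
  (N : I -> I -> I -> nat) (d : I -> R)
  (HFA : is_fusion_algebra e bar N d)
  (X : set I) (HXfin : finite_set X) (HXsym : bar @` X = X) (HXne : X !=set0) :
  exists C : R, 0 < C /\
    (forall A : set I, finite_set A ->
       (weight d (boundary N X A) <= C%:E * weight d (inner_boundary N X A))%E) /\
    (generating bar N X -> Fol N d X <= C * Fol_inn N d X).
Proof.
have C_gt0 : 0 < 1 + fine (weight d X) by rewrite ltr_wpDr ?fine_ge0 ?weight_ge0.
have bd_le := weight_boundary_le HFA HXfin HXsym.
exists (1 + fine (weight d X)); split=> //; split=> // _.
apply: (folner_const_le e C_gt0 _ bd_le) => A finA.
exact: sub_finite_set (@inner_boundary_sub _ _ _ A) finA.
Qed.
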